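(* Let $\mathcal B$ be a finite set of finite algebras of signature $F$ and assume that $\mathcal B$ has a majority term. The algebras in $\mathcal B$ share a common ternary discriminator term if and only if, for all $\mathbf A_1,\mathbf A_2\in\mathcal B$, the algebras $\mathbf A_1$ and $\mathbf A_2$ share a common ternary discriminator term.
   Context: The ternary discriminator on a set $A$ is $\tau(x,y,z)=x$ if $x\ne y$, $=z$ if $x=y$. A family of algebras shares a common ternary discriminator term if there is a ternary term $t$ with $t^{\mathbf A}$ equal to the ternary discriminator on $A$ for each member $\mathbf A$. $\mathcal B$ has a majority term if some ternary term $m$ satisfies $m(x,x,y)=m(x,y,x)=m(y,x,x)=x$ in every algebra of $\mathcal B$. *)

From mathcomp Require Import all_boot.
Set Implicit Arguments. Unset Strict Implicit. Unset Printing Implicit Defensive.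

Record signature := Signature { op_sym : Type; arity : op_sym -> nat }.

Inductive term (F : signature) (V : Type) : Type :=
  | Var : V -> term F V
  | App : forall f : op_sym F, ('I_(arity f) -> term F V) -> term F V.

Record algebra (F : signature) := Algebra {
  carrier :> finType;
  interp : forall f : op_sym F, ('I_(arity f) -> carrier) -> carrier }.

Fixpoint eval (F : signature) (V : Type) (A : algebra F) (v : V -> A)
  (t : term F V) : A :=
  match t with
  | Var x => v x
  | App f args => @interp F A f (fun i => @eval F V A v (args i))
  end.

Definition term3 (F : signature) := term F 'I_3.

Definition val3 (T : Type) (x y z : T) : 'I_3 -> T :=
  fun k => if val k == 0 then x else if val k == 1 then y else z.

Definition term_op3 (F : signature) (A : algebra F) (t : term3 F) (x y z : A) : A :=
  @eval F _ A (val3 x y z) t.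

Definition discriminator (T : eqType) (x y z : T) : T :=
  if x != y then x else z.

Definition is_discriminator_term (F : signature) (t : term3 F) (A : algebra F) :=
  forall x y z : A, @term_op3 F A t x y z = discriminator x y z.

Definition is_majority_term (F : signature) (m : term3 F) (A : algebra F) :=
  forall x y : A, [/\ @term_op3 F A m x x y = x, @term_op3 F A m x y x = x
                    & @term_op3 F A m y x x = x].

(** Baker–Pixley style gluing: if [t_a], [t_b], [t_c] are discriminator terms
    for all algebras of a family except [A_a], [A_b], [A_c] respectively (for
    distinct [a], [b], [c]), then on every member at least two of them compute
    the discriminator, so the majority term [m(t_a, t_b, t_c)] computes it on
    the whole family.  By induction on the size of the family, everything
    reduces to families of at most two algebras. *)

From mathcomp Require Import all_boot.
From Stdlib Require Import FunctionalExtensionality.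

Fixpoint subst (F : signature) (V W : Type) (s : V -> term F W) (t : term F V) :
    term F W :=
  match t with
  | Var x => s x
  | App f args => @App F W f (fun i => subst F V W s (args i))
  end.
Arguments subst {F V W}.

Section Substitution.
Variables (F : signature) (A : algebra F).

Lemma eval_ext (V : Type) (v w : V -> A) (t : term F V) :
  v =1 w -> eval v t = eval w t.
Proof.
move=> vw; elim: t => [x|f args IH] //=.
by congr (interp _); apply: functional_extensionality_dep => i; rewrite IH.
Qed.

Lemma eval_subst (V W : Type) (v : W -> A) (s : V -> term F W) (t : term F V) :
  eval v (subst s t) = eval (fun x => eval v (s x)) t.
Proof.
elim: t => [x|f args IH] //=.
by congr (interp _); apply: functional_extensionality_dep => i; rewrite IH.
Qed.

Lemma term_op3_subst (m t1 t2 t3 : term3 F) (x y z : A) :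
  term_op3 (subst (val3 t1 t2 t3) m) x y z =
  term_op3 m (term_op3 t1 x y z) (term_op3 t2 x y z) (term_op3 t3 x y z).
Proof.
rewrite /term_op3 eval_subst; apply: eval_ext => k.
by rewrite /val3; case: ifP => _ //; case: ifP.
Qed.

Lemma majority_subst_discriminator (m t1 t2 t3 : term3 F) :
  is_majority_term m A ->
  [\/ is_discriminator_term t2 A /\ is_discriminator_term t3 A,
      is_discriminator_term t1 A /\ is_discriminator_term t3 A
    | is_discriminator_term t1 A /\ is_discriminator_term t2 A] ->
  is_discriminator_term (subst (val3 t1 t2 t3) m) A.
Proof.
move=> maj_m two_disc x y z; rewrite term_op3_subst.
set d := discriminator x y z.
by case: two_disc => -[-> ->];
  [case: (maj_m d (term_op3 t1 x y z)) | case: (maj_m d (term_op3 t2 x y z))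
  | case: (maj_m d (term_op3 t3 x y z))].
Qed.

End Substitution.

Lemma subset_set2_of_setD1 (T : finType) (A : {set T}) (a b : T) :
  A :\ a :\ b = set0 -> A \subset [set a; b].
Proof.
move=> Aab0; apply/subsetP => x xA.
apply: contraT; rewrite !inE negb_or => /andP [xa xb].
by have := in_set0 x; rewrite -Aab0 !inE xa xb xA.
Qed.

Section Gluing.
Variables (F : signature) (I : finType) (B : I -> algebra F) (m : term3 F).
Hypothesis majority_m : forall i, is_majority_term m (B i).
Hypothesis pairwise_disc : forall i j, exists t : term3 F,
  is_discriminator_term t (B i) /\ is_discriminator_term t (B j).

Definition discriminator_on (t : term3 F) (S : {set I}) :=
  forall i, i \in S -> is_discriminator_term t (B i).

Lemma discriminator_on_pair (a b : I) (S : {set I}) :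
  S \subset [set a; b] -> exists t, discriminator_on t S.
Proof.
move=> /subsetP sSab; have [t [ta tb]] := pairwise_disc a b.
by exists t => i /sSab /set2P [] ->.
Qed.

Lemma discriminator_on_glue (a b c : I) (S : {set I}) (t_a t_b t_c : term3 F) :
  discriminator_on t_a (S :\ a) -> discriminator_on t_b (S :\ b) ->
  discriminator_on t_c (S :\ c) -> [&& a != b, a != c & b != c] ->
  discriminator_on (subst (val3 t_a t_b t_c) m) S.
Proof.
move=> disc_a disc_b disc_c /and3P [ab ac bc] i iS.
have inD1 x : i != x -> i \in S :\ x by rewrite !inE iS andbT.
apply: majority_subst_discriminator => //.
have [ia | nia] := eqVneq i a.
  by constructor 1; split; [apply: disc_b | apply: disc_c]; rewrite inD1 ?ia.
have [ib | nib] := eqVneq i b.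
  by constructor 2; split; [apply: disc_a | apply: disc_c]; rewrite inD1 // ib.
by constructor 3; split; [apply: disc_a | apply: disc_b]; rewrite inD1.
Qed.

Lemma discriminator_on_set (S : {set I}) : exists t, discriminator_on t S.
Proof.
have [n] := ubnP #|S|; elim: n S => // n IH S ltSn.
have IHD1 x : x \in S -> exists t, discriminator_on t (S :\ x).
  by move=> xS; apply: IH; apply: leq_trans (proper_card (properD1 xS)) _.
have [S0 | [a aS]] := set_0Vmem S.
  by exists (@Var F _ ord0) => i; rewrite S0 inE.
have [Sa0 | [b bSa]] := set_0Vmem (S :\ a).
  apply: (discriminator_on_pair a a); apply: subset_set2_of_setD1.
  by rewrite Sa0 set0D.
have [Sab0 | [c cSab]] := set_0Vmem (S :\ a :\ b).
  by apply: (discriminator_on_pair a b); apply: subset_set2_of_setD1.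
move: bSa cSab; rewrite !inE => /andP [ba bS] /and3P [cb ca cS].
have [t_a disc_a] := IHD1 a aS; have [t_b disc_b] := IHD1 b bS.
have [t_c disc_c] := IHD1 c cS.
exists (subst (val3 t_a t_b t_c) m).
apply: discriminator_on_glue disc_a disc_b disc_c _.
by rewrite eq_sym ba eq_sym ca eq_sym cb.
Qed.

End Gluing.

Theorem corollary3p3 (F : signature) (I : finType) (B : I -> algebra F) :
  (exists m : term3 F, forall i : I, is_majority_term m (B i)) ->
  ((exists t : term3 F, forall i : I, is_discriminator_term t (B i)) <->
   (forall i j : I, exists t : term3 F,
        is_discriminator_term t (B i) /\ is_discriminator_term t (B j))).
Proof.
case=> m majority_m; split; first by case=> t disc_t i j; exists t.
move=> pairwise_disc.
have [t disc_t] := @discriminator_on_set F I B m majority_m pairwise_disc [set: I].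
by exists t => i; apply: disc_t; rewrite inE.
Qed.
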